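(* Consider the planar system $$\frac{dC}{dt} = 1 + m_1\frac{CL}{1+L} - m_2\frac{CL}{1+m_3C} - m_4C,\qquad \frac{dL}{dt} = L - m_5 CL,$$ with positive parameters $m_1,\dots,m_5$, and its equilibrium $E_3=(1/m_5,L_3)$, where $L_3=\frac{-b+\sqrt{\Delta}}{2a}$ with $a=-\frac{m_2}{1+m_3/m_5}$, $b=m_1+m_5-m_4-\frac{m_2}{1+m_3/m_5}$, $c=m_5-m_4$, $\Delta=b^2-4ac$. A Hopf bifurcation occurs at $E_3$ when $$m_2=\frac{(m_3+m_5)^2\,(m_1m_3-m_4m_3-m_5^2)}{m_3\,(m_3m_4+m_5^2)},$$ under the conditions $$m_1>\frac{(m_3m_4+m_5^2)^2}{m_3^2(m_4-m_5)}\quad\text{and}\quad m_4>m_5.$$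
   Context: Nondimensional model of CAR-T cells $C$ and lymphoma cells $L$; $E_3$ is one of the two coexistence equilibria with $C=1/m_5$, its $L$-coordinate being a root of $aL^2+bL+c=0$. *)

From Stdlib Require Import Reals.
From Coquelicot Require Import Coquelicot.
Open Scope R_scope.

Definition fieldC (m1 m2 m3 m4 : R) (C L : R) : R :=
  1 + m1 * (C * L / (1 + L)) - m2 * (C * L / (1 + m3 * C)) - m4 * C.
Definition fieldL (m5 : R) (C L : R) : R := L - m5 * C * L.

Definition coef_a (m2 m3 m5 : R) : R := - (m2 / (1 + m3 / m5)).
Definition coef_b (m1 m2 m3 m4 m5 : R) : R :=
  m1 + m5 - m4 - m2 / (1 + m3 / m5).
Definition coef_c (m4 m5 : R) : R := m5 - m4.
Definition discr (m1 m2 m3 m4 m5 : R) : R :=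
  (coef_b m1 m2 m3 m4 m5) ^ 2 - 4 * coef_a m2 m3 m5 * coef_c m4 m5.
Definition L3 (m1 m2 m3 m4 m5 : R) : R :=
  (- coef_b m1 m2 m3 m4 m5 + sqrt (discr m1 m2 m3 m4 m5)) / (2 * coef_a m2 m3 m5).
Definition E3 (m1 m2 m3 m4 m5 : R) : R * R := (1 / m5, L3 m1 m2 m3 m4 m5).

Definition jacobian (F G : R -> R -> R) (x y : R) : R * R * R * R :=
  (Derive (fun u => F u y) x, Derive (fun v => F x v) y,
   Derive (fun u => G u y) x, Derive (fun v => G x v) y).

Definition charpoly (J : R * R * R * R) (lam : C) : C :=
  let '(a11, a12, a21, a22) := J in
  Cminus (Cmult (Cminus (RtoC a11) lam) (Cminus (RtoC a22) lam))
         (Cmult (RtoC a12) (RtoC a21)).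
Definition is_eigenvalue (J : R * R * R * R) (lam : C) : Prop :=
  charpoly J lam = RtoC 0.

(* Hopf bifurcation (in the sense of the Hopf bifurcation theorem's
   eigenvalue hypotheses) for a one-parameter family of planar fields
   (F p, G p) with equilibrium branch E p, at parameter value p0:
   near p0 the Jacobian at E p has a pair of complex conjugate eigenvalues
   alpha p +- i omega p (omega p > 0), which are purely imaginary at p0
   (alpha p0 = 0) and cross the imaginary axis transversally
   (alpha'(p0) <> 0). *)
Definition hopf_bifurcation_at (F G : R -> R -> R -> R) (E : R -> R * R) (p0 : R)
  : Prop :=
  exists delta : R, 0 < delta /\
  exists alpha omega : R -> R,
    (forall p, Rabs (p - p0) < delta ->
       F p (fst (E p)) (snd (E p)) = 0 /\ G p (fst (E p)) (snd (E p)) = 0 /\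
       0 < omega p /\
       is_eigenvalue (jacobian (F p) (G p) (fst (E p)) (snd (E p))) (alpha p, omega p) /\
       is_eigenvalue (jacobian (F p) (G p) (fst (E p)) (snd (E p))) (alpha p, - omega p)) /\
    alpha p0 = 0 /\ ex_derive alpha p0 /\ Derive alpha p0 <> 0.

Definition m2_crit (m1 m3 m4 m5 : R) : R :=
  (m3 + m5) ^ 2 * (m1 * m3 - m4 * m3 - m5 ^ 2) / (m3 * (m3 * m4 + m5 ^ 2)).

From Stdlib Require Import Reals Lra Psatz.
From Coquelicot Require Import Coquelicot.
Open Scope R_scope.

(* At [C = 1/m5] the entry [a22 = 1 - m5 C] of the Jacobian vanishes, and the
   equilibrium equation turns [a11] into an explicit function of [sqrt discr].
   Hence the real part [alpha] of the eigenvalues at [E3] has a closed form;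
   at [m2_crit] it vanishes, the determinant exceeds [alpha^2] (so the
   eigenvalues are complex, by continuity also nearby), and [alpha'] cannot
   vanish: squaring [alpha' = 0] forces [(m5 - m4) m1 = 0]. *)

Definition mx_tr (J : R * R * R * R) : R := let '(a11, _, _, a22) := J in a11 + a22.

Definition mx_det (J : R * R * R * R) : R :=
  let '(a11, a12, a21, a22) := J in a11 * a22 - a12 * a21.

Lemma is_eigenvalue_conj_pair (J : R * R * R * R) (w : R) :
  w ^ 2 = mx_det J - (mx_tr J / 2) ^ 2 ->
  is_eigenvalue J (mx_tr J / 2, w) /\ is_eigenvalue J (mx_tr J / 2, - w).
Proof.
  destruct J as [[[a11 a12] a21] a22]; simpl; intros Hw.
  unfold is_eigenvalue, charpoly, Cminus, Cmult, Cplus, Copp, RtoC; simpl.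
  split; apply injective_projections; simpl; nra.
Qed.

Lemma quadratic_root_spec (a b c : R) :
  a <> 0 -> 0 <= b ^ 2 - 4 * a * c ->
  let r := (- b + sqrt (b ^ 2 - 4 * a * c)) / (2 * a) in
  2 * a * r + b = sqrt (b ^ 2 - 4 * a * c) /\ a * r ^ 2 + b * r + c = 0.
Proof.
  intros Ha HD r.
  assert (Hr : 2 * a * r + b = sqrt (b ^ 2 - 4 * a * c)) by (unfold r; field; exact Ha).
  split; [exact Hr |].
  pose proof (pow2_sqrt _ HD) as Hs; rewrite <- Hr in Hs.
  apply (Rmult_eq_reg_l (4 * a)); [nra | lra].
Qed.

Lemma sqrt_discr_neq (a b c : R) :
  0 <= b ^ 2 - 4 * a * c -> c <> 0 -> a - b + c <> 0 ->
  b - 2 * c <> sqrt (b ^ 2 - 4 * a * c).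
Proof.
  intros HD Hc Habc E.
  pose proof (pow2_sqrt _ HD) as Hs; rewrite <- E in Hs.
  apply Hc, (Rmult_eq_reg_r (a - b + c)); [nra | exact Habc].
Qed.

Lemma locally_Rabs (P : R -> Prop) (x : R) :
  locally x P -> exists d, 0 < d /\ forall y, Rabs (y - x) < d -> P y.
Proof.
  intros [d Hd]; exists d; split; [apply cond_pos |].
  intros y Hy; apply Hd; exact Hy.
Qed.

Lemma locally_pos_of_derivable (f : R -> R) (x : R) :
  ex_derive f x -> 0 < f x -> locally x (fun y => 0 < f y).
Proof.
  intros Hf Hpos.
  exact (@ex_derive_continuous R_AbsRing R_NormedModule f x Hf _ (open_gt 0 _ Hpos)).
Qed.

Section CarT.

Variables m1 m3 m4 m5 : R.
Hypothesis m3_pos : 0 < m3.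
Hypothesis m5_pos : 0 < m5.

Local Notation a p := (coef_a p m3 m5).
Local Notation b p := (coef_b m1 p m3 m4 m5).
Local Notation c := (coef_c m4 m5).
Local Notation Delta p := (discr m1 p m3 m4 m5).
Local Notation L3p p := (L3 m1 p m3 m4 m5).

Lemma scale_pos : 0 < 1 + m3 / m5.
Proof. assert (0 < m3 / m5) by (apply Rdiv_lt_0_compat; lra); lra. Qed.

Lemma coef_a_neg (p : R) : 0 < p -> a p < 0.
Proof.
  intros Hp; unfold coef_a.
  assert (0 < p / (1 + m3 / m5)) by (apply Rdiv_lt_0_compat; [lra | exact scale_pos]).
  lra.
Qed.

Lemma L3_root (p : R) : 0 < p -> 0 <= Delta p ->
  2 * a p * L3p p + b p = sqrt (Delta p) /\ a p * L3p p ^ 2 + b p * L3p p + c = 0.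
Proof.
  intros Hp HD; apply quadratic_root_spec; [| exact HD].
  pose proof (coef_a_neg p Hp); lra.
Qed.

Definition field_jacobian (m2 C L : R) : R * R * R * R :=
  (m1 * (L / (1 + L)) - m2 * (L / (1 + m3 * C) ^ 2) - m4,
   m1 * (C / (1 + L) ^ 2) - m2 * (C / (1 + m3 * C)),
   - m5 * L,
   1 - m5 * C).

Lemma jacobian_field (m2 C L : R) : 1 + L <> 0 -> 1 + m3 * C <> 0 ->
  jacobian (fieldC m1 m2 m3 m4) (fieldL m5) C L = field_jacobian m2 C L.
Proof.
  intros HL HC; unfold jacobian, field_jacobian, fieldC, fieldL.
  repeat f_equal; apply is_derive_unique; auto_derive; auto; field; auto.
Qed.

Lemma fieldC_at_C3 (m2 L : R) : 1 + L <> 0 ->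
  fieldC m1 m2 m3 m4 (1 / m5) L = (a m2 * L ^ 2 + b m2 * L + c) / (m5 * (1 + L)).
Proof.
  pose proof scale_pos; intros HL.
  unfold fieldC, coef_a, coef_b, coef_c; field; repeat split; lra.
Qed.

Lemma half_trace_at_C3 (m2 L : R) : 1 + L <> 0 ->
  mx_tr (field_jacobian m2 (1 / m5) L) / 2 =
  (- m5 - m3 / (m3 + m5) * a m2 * L + (a m2 * L ^ 2 + b m2 * L + c) / (1 + L)) / 2.
Proof.
  pose proof scale_pos; intros HL; simpl.
  unfold coef_a, coef_b, coef_c; field; repeat split; lra.
Qed.

Definition J3 (p : R) : R * R * R * R := field_jacobian p (1 / m5) (L3p p).

Definition alpha3 (p : R) : R :=
  (- m5 + m3 / (m3 + m5) * ((b p - sqrt (Delta p)) / 2)) / 2.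

Definition omega_sq (p : R) : R := mx_det (J3 p) - (mx_tr (J3 p) / 2) ^ 2.

Definition admissible (p : R) : Prop :=
  0 < p /\ 0 < Delta p /\ 0 < 1 + L3p p /\ 0 < omega_sq p.

Lemma half_trace_J3 (p : R) : 0 < p -> 0 <= Delta p -> 1 + L3p p <> 0 ->
  mx_tr (J3 p) / 2 = alpha3 p.
Proof.
  intros Hp HD HL; destruct (L3_root p Hp HD) as [Hsqrt Hroot].
  unfold J3, alpha3; rewrite half_trace_at_C3, Hroot, <- Hsqrt by exact HL.
  field; lra.
Qed.

Lemma E3_spectrum (p : R) : admissible p ->
  fieldC m1 p m3 m4 (1 / m5) (L3p p) = 0 /\ fieldL m5 (1 / m5) (L3p p) = 0 /\
  0 < sqrt (omega_sq p) /\
  is_eigenvalue (jacobian (fieldC m1 p m3 m4) (fieldL m5) (1 / m5) (L3p p))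
    (alpha3 p, sqrt (omega_sq p)) /\
  is_eigenvalue (jacobian (fieldC m1 p m3 m4) (fieldL m5) (1 / m5) (L3p p))
    (alpha3 p, - sqrt (omega_sq p)).
Proof.
  intros (Hp & HD & HL & Hw); pose proof scale_pos.
  destruct (L3_root p Hp (Rlt_le _ _ HD)) as [_ Hroot].
  split; [rewrite fieldC_at_C3, Hroot by lra; field; lra |].
  split; [unfold fieldL; field; lra |].
  split; [apply sqrt_lt_R0, Hw |].
  assert (HC : 1 + m3 * (1 / m5) = 1 + m3 / m5) by (field; lra).
  rewrite jacobian_field, <- (half_trace_J3 p) by lra.
  apply is_eigenvalue_conj_pair, pow2_sqrt, Rlt_le, Hw.
Qed.

Lemma discr_derivable (p : R) : ex_derive (fun q => Delta q) p.
Proof.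
  pose proof scale_pos.
  unfold discr, coef_a, coef_b, coef_c; auto_derive; lra.
Qed.

Lemma L3_derivable (p : R) : 0 < p -> 0 < Delta p -> ex_derive (fun q => L3p q) p.
Proof.
  intros Hp HD; pose proof scale_pos; pose proof (coef_a_neg p Hp).
  unfold L3, discr, coef_a, coef_b, coef_c in *.
  auto_derive; repeat split; lra.
Qed.

Lemma omega_sq_derivable (p : R) :
  0 < p -> 0 < Delta p -> 0 < 1 + L3p p -> ex_derive omega_sq p.
Proof.
  intros Hp HD HL; pose proof (L3_derivable p Hp HD).
  assert (HC : 1 + m3 * (1 / m5) = 1 + m3 / m5) by (field; lra).
  pose proof scale_pos; unfold omega_sq, J3; cbn.
  auto_derive; rewrite ?HC; repeat split; auto; nra.
Qed.

Definition dalpha3 (p : R) : R :=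
  m3 * m5 / (4 * (m3 + m5) ^ 2) * (-1 + (b p - 2 * c) / sqrt (Delta p)).

Lemma alpha3_derive (p : R) : 0 < Delta p -> is_derive alpha3 p (dalpha3 p).
Proof.
  intros HD; pose proof scale_pos.
  assert (Hr : 0 < sqrt (Delta p)) by (apply sqrt_lt_R0, HD).
  unfold alpha3, dalpha3; set (r := sqrt (Delta p)) in *.
  unfold discr, coef_a, coef_b, coef_c; auto_derive.
  - unfold discr, coef_a, coef_b, coef_c, Rdiv in HD; nra.
  - match goal with |- context [sqrt ?A] =>
      replace (A : R) with (Delta p) by (unfold discr, coef_a, coef_b, coef_c, Rdiv; ring)
    end.
    fold r; field; repeat split; lra.
Qed.

Lemma dalpha3_neq0 (p : R) : m1 <> 0 -> m4 <> m5 -> 0 < Delta p -> dalpha3 p <> 0.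
Proof.
  intros H1 H45 HD; pose proof (sqrt_lt_R0 _ HD) as Hr.
  unfold dalpha3; apply Rmult_integral_contrapositive_currified.
  - apply Rgt_not_eq, Rdiv_lt_0_compat; nra.
  - intros E; apply (sqrt_discr_neq (a p) (b p) c).
    + exact (Rlt_le _ _ HD).
    + unfold coef_c; lra.
    + unfold coef_a, coef_b, coef_c; lra.
    + fold (Delta p).
      replace (b p - 2 * c) with ((b p - 2 * c) / sqrt (Delta p) * sqrt (Delta p)) by (field; lra).
      replace ((b p - 2 * c) / sqrt (Delta p)) with 1 by lra; ring.
Qed.

Hypothesis m1_pos : 0 < m1.
Hypothesis m4_gt_m5 : m4 > m5.
Hypothesis m1_large : m1 > (m3 * m4 + m5 ^ 2) ^ 2 / (m3 ^ 2 * (m4 - m5)).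

(* [m2_crit = (m3 + m5)^2 Yc / (m3 Xc)], and [m1_large] says [Dc > 0]. *)
Local Notation p0 := (m2_crit m1 m3 m4 m5).
Local Notation Xc := (m3 * m4 + m5 ^ 2).
Local Notation Yc := (m1 * m3 - m4 * m3 - m5 ^ 2).
Local Notation Dc := (m1 * m3 ^ 2 * (m4 - m5) - Xc ^ 2).

Lemma crit_consts_pos : 0 < Xc /\ 0 < Yc /\ 0 < Dc.
Proof.
  assert (HX : 0 < Xc) by nra.
  assert (Hk : 0 < m3 ^ 2 * (m4 - m5)) by (apply Rmult_lt_0_compat; [apply pow_lt |]; lra).
  assert (HD : 0 < Dc).
  { pose proof (Rmult_lt_compat_r _ _ _ Hk m1_large) as H.
    replace (Xc ^ 2 / (m3 ^ 2 * (m4 - m5)) * (m3 ^ 2 * (m4 - m5))) with (Xc ^ 2)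
      in H by (field; lra).
    lra. }
  (* [0 < m3 (m4 - m5) < Xc], so [Dc > 0] gives [m1 m3 > Xc]. *)
  assert (Hk' : 0 < m3 * (m4 - m5) < Xc) by (split; nra).
  assert (Hm : Xc < m1 * m3).
  { apply (Rmult_lt_reg_r (m3 * (m4 - m5))); [lra |].
    assert (Xc * (m3 * (m4 - m5)) < Xc ^ 2) by nra.
    nra. }
  repeat split; lra.
Qed.

Lemma m2_crit_pos : 0 < p0.
Proof.
  destruct crit_consts_pos as (HX & HY & _); unfold m2_crit.
  apply Rdiv_lt_0_compat; apply Rmult_lt_0_compat; try apply pow_lt; lra.
Qed.

Lemma sqrt_discr_crit : sqrt (Delta p0) = Dc / (m3 * Xc).
Proof.
  destruct crit_consts_pos as (HX & HY & HD).
  replace (Delta p0) with ((Dc / (m3 * Xc)) ^ 2).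
  - apply sqrt_pow2, Rlt_le, Rdiv_lt_0_compat; nra.
  - unfold discr, coef_a, coef_b, coef_c, m2_crit; field; repeat split; nra.
Qed.

Lemma discr_crit_pos : 0 < Delta p0.
Proof.
  destruct crit_consts_pos as (HX & HY & HD).
  apply sqrt_lt_0_alt; rewrite sqrt_0, sqrt_discr_crit.
  apply Rdiv_lt_0_compat; nra.
Qed.

Lemma L3_crit : L3p p0 = Xc / Yc.
Proof.
  destruct crit_consts_pos as (HX & HY & HD).
  unfold L3; rewrite sqrt_discr_crit.
  unfold coef_a, coef_b, m2_crit; field; repeat split; nra.
Qed.

Lemma alpha3_crit : alpha3 p0 = 0.
Proof.
  destruct crit_consts_pos as (HX & HY & HD).
  unfold alpha3; rewrite sqrt_discr_crit.
  unfold coef_b, m2_crit; field; repeat split; nra.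
Qed.

Lemma omega_sq_crit : omega_sq p0 = Dc / (m1 * m3 ^ 2).
Proof.
  destruct crit_consts_pos as (HX & HY & HD).
  unfold omega_sq, J3; rewrite L3_crit; cbn.
  unfold m2_crit; field; repeat split; nra.
Qed.

Lemma admissible_near_crit :
  exists d, 0 < d /\ forall p, Rabs (p - p0) < d -> admissible p.
Proof.
  destruct crit_consts_pos as (HX & HY & HD).
  pose proof m2_crit_pos as Hp; pose proof discr_crit_pos as HDelta.
  assert (HL : 0 < 1 + L3p p0).
  { rewrite L3_crit; assert (0 < Xc / Yc) by (apply Rdiv_lt_0_compat; lra); lra. }
  assert (Hw : 0 < omega_sq p0) by (rewrite omega_sq_crit; apply Rdiv_lt_0_compat; nra).
  apply locally_Rabs; repeat apply filter_and; apply locally_pos_of_derivable; auto.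
  - apply ex_derive_id.
  - apply discr_derivable.
  - auto_derive; exact (L3_derivable p0 Hp HDelta).
  - apply omega_sq_derivable; auto.
Qed.

End CarT.

Theorem theorem8 (m1 m3 m4 m5 : R) :
  0 < m1 -> 0 < m3 -> 0 < m4 -> 0 < m5 ->
  m1 > (m3 * m4 + m5 ^ 2) ^ 2 / (m3 ^ 2 * (m4 - m5)) ->
  m4 > m5 ->
  hopf_bifurcation_at
    (fun m2 => fieldC m1 m2 m3 m4)
    (fun _ => fieldL m5)
    (fun m2 => E3 m1 m2 m3 m4 m5)
    (m2_crit m1 m3 m4 m5).
Proof.
  intros Hm1 Hm3 _ Hm5 Hlarge Hm45.
  destruct (admissible_near_crit m1 m3 m4 m5 Hm3 Hm5 Hm1 Hm45 Hlarge) as (d & Hd & Hnear).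
  pose proof (discr_crit_pos m1 m3 m4 m5 Hm3 Hm5 Hm1 Hm45 Hlarge) as HD.
  pose proof (alpha3_derive m1 m3 m4 m5 Hm3 Hm5 _ HD) as Hderiv.
  exists d; split; [exact Hd |].
  exists (alpha3 m1 m3 m4 m5), (fun p => sqrt (omega_sq m1 m3 m4 m5 p)).
  split; [| split; [| split]].
  - intros p Hp; exact (E3_spectrum m1 m3 m4 m5 Hm3 Hm5 p (Hnear p Hp)).
  - exact (alpha3_crit m1 m3 m4 m5 Hm3 Hm5 Hm1 Hm45 Hlarge).
  - exists (dalpha3 m1 m3 m4 m5 (m2_crit m1 m3 m4 m5)); exact Hderiv.
  - rewrite (is_derive_unique _ _ _ Hderiv).
    apply dalpha3_neq0; lra.
Qed.
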